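(* The flow rewriting system $\mathsf c$ is terminating on the set of cycle-free atomic flows: there is no infinite chain $A_1\to_{\mathsf c}A_2\to_{\mathsf c}\cdots$ with $A_1$ cycle-free.
   Context: An atomic flow is a tuple $(V,E,\eta,up,lo)$: finite sets of vertices and edges, a labelling of vertices by interaction, cut, weakening, coweakening, contraction or cocontraction, and maps $up:E\to V\cup\{\top\}$, $lo:E\to V\cup\{\bot\}$. Upper edges of $\nu$: $lo(\epsilon)=\nu$; lower edges: $up(\epsilon)=\nu$. (Upper, lower) edge numbers: $(0,2)$ interaction, $(2,0)$ cut, $(0,1)$ weakening, $(1,0)$ coweakening, $(2,1)$ contraction, $(1,2)$ cocontraction; no directed cycles; there is $\pi:E\to\{+,-\}$ giving all edges of a (co)contraction the same sign and the two edges of an interaction/cut different signs. A path from $\nu$ to $\nu'$ is a sequence of edges $\epsilon_1,\dots,\epsilon_h$ with $lo(\epsilon_i)=up(\epsilon_{i+1})$, $up(\epsilon_1)=\nu$, $lo(\epsilon_h)=\nu'$; its reversal is a path from $\nu'$ to $\nu$. An $\mathsf{ai}$-path from $\nu$ to $\nu'$ is either a path from $\nu$ to $\nu'$ or a sequence $\epsilon_1,\dots,\epsilon_k,\epsilon_{k+1},\dots,\epsilon_h$ with $\epsilon_k\neq\epsilon_{k+1}$ such that, for some interaction or cut vertex $\nu''$, $\epsilon_1,\dots,\epsilon_k$ is an $\mathsf{ai}$-path from $\nu$ to $\nu''$ and $\epsilon_{k+1},\dots,\epsilon_h$ is an $\mathsf{ai}$-path from $\nu''$ to $\nu'$. An $\mathsf{ai}$-cycle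 is an $\mathsf{ai}$-path from a vertex to itself in which no edge appears twice. A flow is cycle-free if it has no $\mathsf{ai}$-cycle. $A\to_{\mathsf c}B$ means $B$ results from $A$ by one of these subgraph replacements: (c1) a contraction with upper edges $\epsilon_1,\epsilon_2$ whose lower edge is an upper edge of a cut with other upper edge $\epsilon_3$: replace by a new cocontraction with upper edge $\epsilon_3$ and new lower edges $\delta_1,\delta_2$, and two new cuts with upper edges $\{\epsilon_1,\delta_1\}$ and $\{\epsilon_2,\delta_2\}$; (c2) an interaction with lower edges $\epsilon_3,\epsilon_4$ where $\epsilon_4$ is the upper edge of a cocontraction with lower edges $\epsilon_1,\epsilon_2$: replace by a new contraction with lower edge $\epsilon_3$ and new upper edges $\delta_1,\delta_2$, and two new interactions with lower edges $\{\epsilon_1,\delta_1\}$ and $\{\epsilon_2,\delta_2\}$; (c3) a contraction with upper edges $\epsilon_1,\epsilon_2$ whose lower edge is the upper edge of a cocontraction with lower edges $\epsilon_3,\epsilon_4$: replace by cocontractions $\kappa_1,\kappa_2$ with upper edges $\epsilon_1,\epsilon_2$, contractions $\gamma_3,\gamma_4$ with lower edges $\epsilon_3,\epsilon_4$, and four new edges, one from each $\kappa_i$ to each $\gamma_j$. *)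

From mathcomp Require Import all_boot.
Set Implicit Arguments. Unset Strict Implicit. Unset Printing Implicit Defensive.

Inductive kind := Int | Cut | Wk | Cowk | Ctr | Coctr.

(* A (pre)flow: finite lists of vertex and edge names, a labelling eta,
   and up/lo maps where [None] encodes top (for up) resp. bottom (for lo).
   Values of eta/up/lo outside fV/fE are irrelevant. *)
Record flow := Flow {
  fV : seq nat; fE : seq nat;
  eta : nat -> kind;
  up : nat -> option nat;
  lo : nat -> option nat }.

Definition upper_edges (A : flow) (v : nat) := [seq e <- fE A | lo A e == Some v].
Definition lower_edges (A : flow) (v : nat) := [seq e <- fE A | up A e == Some v].

(* (number of upper edges, number of lower edges) *)
Definition arity (k : kind) : nat * nat :=
  match k with
  | Int => (0, 2) | Cut => (2, 0) | Wk => (0, 1)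
  | Cowk => (1, 0) | Ctr => (2, 1) | Coctr => (1, 2)
  end.

Fixpoint dpath (A : flow) (v : nat) (es : seq nat) (v' : nat) : Prop :=
  match es with
  | [::] => False
  | e :: es' => e \in fE A /\ up A e = Some v /\
      match es' with
      | [::] => lo A e = Some v'
      | _ :: _ => exists w, lo A e = Some w /\ dpath A w es' v'
      end
  end.

Definition is_flow (A : flow) : Prop :=
  [/\ uniq (fV A) /\ uniq (fE A),
   (forall e, e \in fE A ->
      (forall v, up A e = Some v -> v \in fV A) /\
      (forall v, lo A e = Some v -> v \in fV A)),
   (forall v, v \in fV A ->
      size (upper_edges A v) = (arity (eta A v)).1 /\
      size (lower_edges A v) = (arity (eta A v)).2),
   (forall v es, ~ dpath A v es v) &
   (exists pi : nat -> bool, forall v, v \in fV A ->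
      match eta A v with
      | Ctr | Coctr => forall e e', e \in upper_edges A v ++ lower_edges A v ->
                         e' \in upper_edges A v ++ lower_edges A v -> pi e = pi e'
      | Int => forall e e', e \in lower_edges A v -> e' \in lower_edges A v ->
                 e != e' -> pi e != pi e'
      | Cut => forall e e', e \in upper_edges A v -> e' \in upper_edges A v ->
                 e != e' -> pi e != pi e'
      | _ => True
      end)].

Inductive aipath (A : flow) : nat -> seq nat -> nat -> Prop :=
| ai_path v es v' : dpath A v es v' -> aipath A v es v'
| ai_rpath v es v' : dpath A v' (rev es) v -> aipath A v es v'
| ai_cat v es1 w es2 v' :
    aipath A v es1 w -> aipath A w es2 v' ->
    w \in fV A -> (eta A w = Int \/ eta A w = Cut) ->
    last 0 es1 <> head 0 es2 ->
    aipath A v (es1 ++ es2) v'.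

Definition aicycle (A : flow) (v : nat) (es : seq nat) : Prop :=
  aipath A v es v /\ uniq es.

Definition cycle_free (A : flow) : Prop := forall v es, ~ aicycle A v es.

Definition frame (A B : flow) (newV remV newE remE modE : seq nat) : Prop :=
  [/\ uniq newV /\ all (fun x => x \notin fV A) newV,
      uniq newE /\ all (fun x => x \notin fE A) newE,
      fV B =i newV ++ [seq x <- fV A | x \notin remV] /\
      fE B =i newE ++ [seq e <- fE A | e \notin remE],
      (forall x, x \in fV A -> x \notin remV -> eta B x = eta A x) &
      (forall e, e \in fE A -> e \notin remE -> e \notin modE ->
         up B e = up A e /\ lo B e = lo A e)].

Definition c1_step (A B : flow) : Prop :=
  exists g k e1 e2 e3 e k' c1 c2 d1 d2 : nat,
  [/\ [/\ g \in fV A, eta A g = Ctr, k \in fV A & eta A k = Cut] /\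
      [/\ e1 \in fE A, e2 \in fE A, e3 \in fE A & e \in fE A],
      [/\ e1 != e2, lo A e1 = Some g, lo A e2 = Some g, up A e = Some g &
          [/\ lo A e = Some k, e3 != e & lo A e3 = Some k]],
      frame A B [:: k'; c1; c2] [:: g; k] [:: d1; d2] [:: e] [:: e1; e2; e3],
      [/\ eta B k' = Coctr, eta B c1 = Cut & eta B c2 = Cut] &
      [/\ up B e1 = up A e1 /\ lo B e1 = Some c1,
          up B e2 = up A e2 /\ lo B e2 = Some c2,
          up B e3 = up A e3 /\ lo B e3 = Some k',
          up B d1 = Some k' /\ lo B d1 = Some c1 &
          up B d2 = Some k' /\ lo B d2 = Some c2]].

Definition c2_step (A B : flow) : Prop :=
  exists i k e1 e2 e3 e4 g i1 i2 d1 d2 : nat,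
  [/\ [/\ i \in fV A, eta A i = Int, k \in fV A & eta A k = Coctr] /\
      [/\ e1 \in fE A, e2 \in fE A, e3 \in fE A & e4 \in fE A],
      [/\ e3 != e4, up A e3 = Some i, up A e4 = Some i, lo A e4 = Some k &
          [/\ e1 != e2, up A e1 = Some k & up A e2 = Some k]],
      frame A B [:: g; i1; i2] [:: i; k] [:: d1; d2] [:: e4] [:: e1; e2; e3],
      [/\ eta B g = Ctr, eta B i1 = Int & eta B i2 = Int] &
      [/\ up B e3 = Some g /\ lo B e3 = lo A e3,
          up B e1 = Some i1 /\ lo B e1 = lo A e1,
          up B e2 = Some i2 /\ lo B e2 = lo A e2,
          up B d1 = Some i1 /\ lo B d1 = Some g &
          up B d2 = Some i2 /\ lo B d2 = Some g]].

Definition c3_step (A B : flow) : Prop :=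
  exists g k e1 e2 e e3 e4 ka1 ka2 ga3 ga4 f13 f14 f23 f24 : nat,
  [/\ [/\ g \in fV A, eta A g = Ctr, k \in fV A & eta A k = Coctr] /\
      [/\ e1 \in fE A, e2 \in fE A, e \in fE A, e3 \in fE A & e4 \in fE A],
      [/\ e1 != e2, lo A e1 = Some g, lo A e2 = Some g, up A e = Some g &
          [/\ lo A e = Some k, e3 != e4, up A e3 = Some k & up A e4 = Some k]],
      frame A B [:: ka1; ka2; ga3; ga4] [:: g; k] [:: f13; f14; f23; f24] [:: e]
        [:: e1; e2; e3; e4],
      [/\ eta B ka1 = Coctr, eta B ka2 = Coctr, eta B ga3 = Ctr & eta B ga4 = Ctr] &
      [/\ [/\ up B e1 = up A e1 /\ lo B e1 = Some ka1,
              up B e2 = up A e2 /\ lo B e2 = Some ka2,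
              up B e3 = Some ga3 /\ lo B e3 = lo A e3 &
              up B e4 = Some ga4 /\ lo B e4 = lo A e4],
          up B f13 = Some ka1 /\ lo B f13 = Some ga3,
          up B f14 = Some ka1 /\ lo B f14 = Some ga4,
          up B f23 = Some ka2 /\ lo B f23 = Some ga3 &
          up B f24 = Some ka2 /\ lo B f24 = Some ga4]].

Definition cstep (A B : flow) : Prop :=
  is_flow A /\ (c1_step A B \/ c2_step A B \/ c3_step A B).

From mathcomp Require Import all_boot zify.
From Stdlib Require Import ClassicalEpsilon.
Set Implicit Arguments. Unset Strict Implicit. Unset Printing Implicit Defensive.

(* An ai-path is a walk through oriented edges which passes straight through
   every vertex and may turn back only at an interaction (coming up) or a cut
   (going down).  A polarity assignment forbids a walk to run through one edge
   in both directions, so in a cycle-free flow this graph of oriented edges is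
   acyclic and carries a rank r, strictly increasing along arcs and bounded by
   the number N of oriented edges of the initial flow.
   Let an edge below a contraction weigh 4^(N - r down) + 4^(r up), and an edge
   above a cocontraction 4^(r down) + 4^(N - r up).  Each rewrite deletes one
   such edge e; giving the new edges the ranks of e (reversed in c1 and c2)
   keeps a rank with the same bound N, while by the arcs through the deleted
   vertices each weight term created by the rewrite is at most a quarter of a
   term of the weight of e.  The total weight, a natural number, thus strictly
   decreases. *)

(** * Oriented edges and ai-walks *)

(* An oriented edge (e, true) runs down e, from up e to lo e; (e, false) runs up. *)
Definition oedge := (nat * bool)%type.

Definition src (A : flow) (a : oedge) := if a.2 then up A a.1 else lo A a.1.
Definition tgt (A : flow) (a : oedge) := if a.2 then lo A a.1 else up A a.1.

Definition turns_at (down : bool) (k : kind) : bool :=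
  if down then if k is Cut then true else false
  else if k is Int then true else false.

Definition ai_link (A : flow) (a b : oedge) : bool :=
  match tgt A a, src A b with
  | Some v, Some w =>
      (v == w) && ((a.2 == b.2) || (a.1 != b.1) && turns_at a.2 (eta A v))
  | _, _ => false
  end.

Definition ai_arc (A : flow) : rel oedge :=
  fun a b => [&& a.1 \in fE A, b.1 \in fE A & ai_link A a b].

Lemma ai_linkP A a b :
  reflect (exists v, [/\ tgt A a = Some v, src A b = Some v &
             a.2 = b.2 \/ [/\ a.1 <> b.1, a.2 <> b.2 & turns_at a.2 (eta A v)]])
          (ai_link A a b).
Proof.
rewrite /ai_link; case: (tgt A a) => [v|]; last by constructor; case=> ? [].
case: (src A b) => [w|]; last by constructor; case=> ? [].
apply: (iffP andP) => [[/eqP <- K]|[u [[<-] [<-] K]]].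
  exists v; split=> //; case: (eqVneq a.2 b.2) K => [? _|N /= /andP [/eqP ? T]].
    by left.
  by right; split=> //; apply/eqP.
split=> //; case: K => [->|[/eqP N _ ->]]; first by rewrite eqxx.
by rewrite N orbT.
Qed.

Definition polarity (A : flow) (pi : nat -> bool) : Prop :=
  forall v, v \in fV A ->
    match eta A v with
    | Ctr | Coctr => forall e e', e \in upper_edges A v ++ lower_edges A v ->
                       e' \in upper_edges A v ++ lower_edges A v -> pi e = pi e'
    | Int => forall e e', e \in lower_edges A v -> e' \in lower_edges A v ->
               e != e' -> pi e != pi e'
    | Cut => forall e e', e \in upper_edges A v -> e' \in upper_edges A v ->
               e != e' -> pi e != pi e'
    | _ => True
    end.

Lemma mem_upper_edges A v x : (x \in upper_edges A v) = (x \in fE A) && (lo A x == Some v).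
Proof. by rewrite mem_filter andbC. Qed.

Lemma mem_lower_edges A v x : (x \in lower_edges A v) = (x \in fE A) && (up A x == Some v).
Proof. by rewrite mem_filter andbC. Qed.

Lemma dpath_rcons A u p v x t : dpath A u p v -> x \in fE A -> up A x = Some v ->
  lo A x = Some t -> dpath A u (rcons p x) t.
Proof.
elim: p u => [|y [|z p] IH] u //=.
  by move=> [Hy [Hu Hl]] Hx Hux Hlx; do 2!split=> //; exists v.
move=> [Hy [Hu [w [Hl D]]]] Hx Hux Hlx; do 2!split=> //; exists w; split=> //.
exact: IH D Hx Hux Hlx.
Qed.

Lemma down_walk_dpath A a w s t : a.1 \in fE A -> path (ai_arc A) a w ->
  all (fun c : oedge => c.2) (a :: w) ->
  src A a = Some s -> tgt A (last a w) = Some t -> dpath A s (map fst (a :: w)) t.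
Proof.
elim: w a s => [|b w IH] [x dx] s /= Hx; rewrite /src /tgt /=.
  by move=> _ /andP [-> _].
case/andP=> /and3P [_ Hb /ai_linkP [v [Hh Ht _]]] P /and3P [D Db Dw] Hs Ht'.
rewrite /src /tgt D /= in Hs Hh; do 2!split=> //; exists v; split=> //.
by apply: IH; rewrite //= ?Db.
Qed.

Lemma up_walk_rev_dpath A a w s t : a.1 \in fE A -> path (ai_arc A) a w ->
  all (fun c : oedge => ~~ c.2) (a :: w) ->
  src A a = Some s -> tgt A (last a w) = Some t -> dpath A t (rev (map fst (a :: w))) s.
Proof.
elim: w a s => [|b w IH] [x dx] s /= Hx; rewrite /src /tgt /=.
  by move=> _ /andP [/negbTE -> _] Hs Ht; rewrite /rev /=.
case/andP=> /and3P [_ Hb /ai_linkP [v [Hh Ht _]]] P /and3P [/negbTE D Db Dw] Hs Ht'.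
rewrite /src /tgt D /= in Hs Hh; rewrite rev_cons.
by apply: (dpath_rcons (v := v)) => //; apply: IH; rewrite //= ?Db.
Qed.

Lemma straight_walk_aipath A a w s t : a.1 \in fE A -> path (ai_arc A) a w ->
  all (fun c : oedge => c.2 == a.2) w ->
  src A a = Some s -> tgt A (last a w) = Some t -> aipath A s (map fst (a :: w)) t.
Proof.
move=> Ha P Hw Hs Ht; case D: a.2.
- apply: ai_path; apply: down_walk_dpath; rewrite //= D.
  by apply: sub_all Hw => c /eqP ->.
- apply: ai_rpath; apply: up_walk_rev_dpath; rewrite //= D.
  by apply: sub_all Hw => c /eqP ->; rewrite D.
Qed.

Section FlowFacts.
Variable A : flow.
Hypothesis hA : is_flow A.

Lemma uniq_fE : uniq (fE A).
Proof. by case: hA => -[]. Qed.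

Lemma up_in_fV x v : x \in fE A -> up A x = Some v -> v \in fV A.
Proof. by case: hA => _ H _ _ _ /H [Hup _]; apply: Hup. Qed.

Lemma lo_in_fV x v : x \in fE A -> lo A x = Some v -> v \in fV A.
Proof. by case: hA => _ H _ _ _ /H [_ Hlo]; apply: Hlo. Qed.

Lemma src_in_fV a v : a.1 \in fE A -> src A a = Some v -> v \in fV A.
Proof. by rewrite /src; case: a.2; [apply: up_in_fV|apply: lo_in_fV]. Qed.

Lemma tgt_in_fV a v : a.1 \in fE A -> tgt A a = Some v -> v \in fV A.
Proof. by rewrite /tgt; case: a.2; [apply: lo_in_fV|apply: up_in_fV]. Qed.

Lemma flow_polarity : exists pi, polarity A pi.
Proof. by case: hA. Qed.

Section Polarity.
Variable pi : nat -> bool.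
Hypothesis Hpi : polarity A pi.

(* A vertex with both an upper and a lower edge is a (co)contraction. *)
Lemma polarity_through v x y : v \in fV A ->
  x \in upper_edges A v -> y \in lower_edges A v -> pi x = pi y.
Proof.
move=> Hv Hx Hy; have [_ _ /(_ v Hv) [Hup Hlo] _ _] := hA.
have Hu : 0 < size (upper_edges A v) by case: (upper_edges A v) Hx.
have Hl : 0 < size (lower_edges A v) by case: (lower_edges A v) Hy.
move: (Hpi Hv); rewrite Hup in Hu; rewrite Hlo in Hl.
by case: (eta A v) Hu Hl => //= _ _ H; apply: H; rewrite mem_cat ?Hx ?Hy ?orbT.
Qed.

Lemma ai_arc_charge a b : ai_arc A a b -> (a.2 == pi a.1) = (b.2 == pi b.1).
Proof.
case: a b => [x dx] [y dy] /and3P [/= Hx Hy /ai_linkP [v [Hh Ht K]]].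
move: Hh Ht K; rewrite /tgt /src /=.
case: dx; case: dy => /= Hh Ht K.
- suff ->: pi x = pi y by [].
  by apply: (polarity_through (lo_in_fV Hx Hh));
    rewrite ?mem_upper_edges ?mem_lower_edges ?Hx ?Hy ?Hh ?Ht ?eqxx.
- case: K => [//|[/eqP Nxy _ T]]; move: T (Hpi (lo_in_fV Hx Hh)).
  case: (eta A v) => //= _ /(_ x y); rewrite !mem_upper_edges Hx Hy Hh Ht eqxx.
  by move=> /(_ isT isT Nxy); case: (pi x); case: (pi y).
- case: K => [//|[/eqP Nxy _ T]]; move: T (Hpi (up_in_fV Hx Hh)).
  case: (eta A v) => //= _ /(_ x y); rewrite !mem_lower_edges Hx Hy Hh Ht eqxx.
  by move=> /(_ isT isT Nxy); case: (pi x); case: (pi y).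
- suff ->: pi y = pi x by [].
  by apply: (polarity_through (up_in_fV Hx Hh));
    rewrite ?mem_upper_edges ?mem_lower_edges ?Hx ?Hy ?Hh ?Ht ?eqxx.
Qed.

Lemma ai_walk_charge a w c : path (ai_arc A) a w -> c \in a :: w ->
  (c.2 == pi c.1) = (a.2 == pi a.1).
Proof.
elim: w a => [|b w IH] a; first by rewrite inE => _ /eqP ->.
rewrite /= inE => /andP [Hab P] /orP [/eqP -> //|Hc].
by rewrite (ai_arc_charge Hab); apply: IH.
Qed.

End Polarity.

(* Cut the walk at its first turn: the initial run is straight, and the turn
   happens at an interaction or a cut. *)
Lemma ai_walk_aipath a w s t : a.1 \in fE A -> path (ai_arc A) a w ->
  src A a = Some s -> tgt A (last a w) = Some t -> aipath A s (map fst (a :: w)) t.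
Proof.
elim: {w}(size w).+1 {-2}w (ltnSn (size w)) a s => // n IH w Hn a s Ha P Hs Ht.
have [Hturn|/hasPn Hstraight] := boolP (has (fun c : oedge => c.2 != a.2) w); last first.
  by apply: straight_walk_aipath => //; apply/allP => c /Hstraight; rewrite negbK.
move: Hn P Ht; case: (split_find Hturn) => b w1 w2 Hb /hasPn Hw1.
rewrite cat_path rcons_path last_cat last_rcons size_cat size_rcons ltnS.
move=> Hn /andP [/andP [P1 /and3P [_ Hb1 /ai_linkP [v [Hv1 Hv2 K]]]] P2] Ht.
have Hlast : (last a w1).2 = a.2.
  by move: (mem_last a w1); rewrite inE => /orP [/eqP -> //|/Hw1]; rewrite negbK => /eqP.
case: K => [E|[Nab _ T]]; first by rewrite -E Hlast eqxx in Hb.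
rewrite cat_rcons -cat_cons map_cat.
apply: (ai_cat (w := v)).
- apply: straight_walk_aipath => //; first by apply/allP => c /Hw1; rewrite negbK.
- by apply: IH => //; lia.
- exact: src_in_fV Hb1 Hv2.
- by move: T; case: (last a w1).2; case: (eta A v) => //; auto.
- by rewrite /= last_map.
Qed.

(* By [ai_walk_charge] a walk never runs through one edge in both directions, so
   its oriented edges are distinct iff its edges are. *)
Lemma closed_walk_aicycle a w v : uniq (a :: w) -> path (ai_arc A) a w ->
  ai_arc A (last a w) a -> src A a = Some v -> aicycle A v (map fst (a :: w)).
Proof.
move=> U P /and3P [Hl Ha /ai_linkP [u [Hu Hsu _]]] Hs.
rewrite Hs in Hsu; case: Hsu Hu => <- Hu.
split; first exact: ai_walk_aipath.
have [pi Hpi] := flow_polarity; rewrite map_inj_in_uniq //.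
move=> [x d1] [y d2] H1 H2 /= E; subst y.
have := ai_walk_charge Hpi P H1; have := ai_walk_charge Hpi P H2; rewrite /= => <-.
by move: H1 H2; case: d1; case: d2; case: (pi x).
Qed.

End FlowFacts.

(** * Ranks *)

Definition ai_reach A a b := exists p, path (ai_arc A) a (rcons p b).

Lemma ai_reach_arc A a b c : ai_reach A a b -> ai_arc A b c -> ai_reach A a c.
Proof. by move=> [p P] Hbc; exists (rcons p b); rewrite rcons_path P last_rcons. Qed.

Lemma ai_arc_reach A a b : ai_arc A a b -> ai_reach A a b.
Proof. by exists [::]; rewrite /= andbT. Qed.

Lemma cycle_free_ai_reach_irrefl A a : is_flow A -> cycle_free A -> ~ ai_reach A a a.
Proof.
move=> hA Hcf [p]; rewrite rcons_path => /andP [P].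
case: (shortenP P) => p' P' U _ Hc.
case/and3P: (Hc) => _ _ /ai_linkP [v [_ Hv _]].
exact: Hcf v _ (closed_walk_aicycle hA U P' Hc Hv).
Qed.

Definition ai_reachb A a b : bool :=
  if excluded_middle_informative (ai_reach A a b) then true else false.

Lemma ai_reachbP A a b : reflect (ai_reach A a b) (ai_reachb A a b).
Proof. by rewrite /ai_reachb; case: excluded_middle_informative => H; constructor. Qed.

Definition ai_rank A (r : oedge -> nat) N :=
  (forall a b, ai_arc A a b -> r a < r b) /\ (forall a, a.1 \in fE A -> r a <= N).

Definition oedges A : seq oedge := [seq (x, d) | x <- fE A, d <- [:: true; false]].

Lemma count_lt_sub (T : eqType) (P Q : pred T) s z :
  subpred P Q -> z \in s -> Q z -> ~~ P z -> count P s < count Q s.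
Proof.
move=> PQ /splitPr [s1 s2] Qz /negbTE Pz; rewrite !count_cat /= Qz Pz.
by rewrite add0n add1n addnS ltnS leq_add ?sub_count.
Qed.

(* Rank [a] by the number of oriented edges from which [a] is reachable. *)
Lemma cycle_free_ai_rank A : is_flow A -> cycle_free A ->
  exists r, ai_rank A r (size (oedges A)).
Proof.
move=> hA Hcf; exists (fun a => count (ai_reachb A ^~ a) (oedges A)); split; last first.
  by move=> a _; apply: count_size.
move=> [x d] b Hab; apply: (count_lt_sub (z := (x, d))).
- by move=> c /ai_reachbP Hc; apply/ai_reachbP; apply: ai_reach_arc Hc Hab.
- by apply: allpairs_f; [case/and3P: Hab|rewrite !inE; case: (d)].
- exact/ai_reachbP/ai_arc_reach.
- exact/ai_reachbP/cycle_free_ai_reach_irrefl.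
Qed.

(** * Weights *)

Definition is_ctr (k : kind) := if k is Ctr then true else false.
Definition is_coctr (k : kind) := if k is Coctr then true else false.

Definition has_kind (P : kind -> bool) A (o : option nat) :=
  if o is Some v then (v \in fV A) && P (eta A v) else false.

Definition pow_inc k := 4 ^ k.
Definition pow_dec N k := 4 ^ (N - k).

Definition ctr_weight A N (r : oedge -> nat) x :=
  if has_kind is_ctr A (up A x) then pow_dec N (r (x, true)) + pow_inc (r (x, false)) else 0.

Definition coctr_weight A N (r : oedge -> nat) x :=
  if has_kind is_coctr A (lo A x) then pow_inc (r (x, true)) + pow_dec N (r (x, false)) else 0.

Definition edge_weight A N r x := ctr_weight A N r x + coctr_weight A N r x.

Definition weight A N r := \sum_(x <- fE A) edge_weight A N r x.

Lemma pow_inc_lt a b : a < b -> 4 * pow_inc a <= pow_inc b.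
Proof. by move=> ab; rewrite -expnS leq_pexp2l. Qed.

Lemma pow_dec_lt N a b : a < b -> b <= N -> 4 * pow_dec N b <= pow_dec N a.
Proof. by move=> ab bN; rewrite -expnS leq_pexp2l //; lia. Qed.

Lemma pow_dec_gt0 N k : 0 < pow_dec N k.
Proof. exact: expn_gt0. Qed.

Lemma pow_inc_gt0 k : 0 < pow_inc k.
Proof. exact: expn_gt0. Qed.

(* New edges of a rewrite inherit the ranks of the removed edge [e0], reversed
   when [flip] holds; old edges keep theirs. *)
Definition origin (newE : seq nat) (e0 : nat) (flip : bool) (a : oedge) : oedge :=
  if a.1 \in newE then (e0, a.2 (+) flip) else a.

Definition pull_rank newE e0 flip (r : oedge -> nat) a := r (origin newE e0 flip a).

Lemma sum_pick_le (T : eqType) (s : seq T) m X :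
  uniq s -> \sum_(x <- s) (if x == m then X else 0) <= X.
Proof.
elim: s => [|y s IH]; first by rewrite big_nil.
rewrite /= big_cons => /andP [Ny U]; case: (eqVneq y m) => [<-|_]; last exact: IH.
rewrite big1_seq ?addn0 // => x /andP [_ Hx].
by case: eqP => // Exy; rewrite -Exy Hx in Ny.
Qed.

Lemma sum_pick_ge (T : eqType) (s : seq T) x X :
  x \in s -> X x <= \sum_(m <- s) (if x == m then X m else 0).
Proof. by move=> Hx; rewrite (big_rem x Hx) /= eqxx leq_addr. Qed.

Lemma ctr_weight_le A N r x :
  ctr_weight A N r x <= pow_dec N (r (x, true)) + pow_inc (r (x, false)).
Proof. by rewrite /ctr_weight; case: has_kind. Qed.

Lemma coctr_weight_le A N r x :
  coctr_weight A N r x <= pow_inc (r (x, true)) + pow_dec N (r (x, false)).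
Proof. by rewrite /coctr_weight; case: has_kind. Qed.

Section Frame.
Variables (A B : flow) (newV remV newE modE : seq nat) (e0 : nat) (flip : bool).
Hypotheses (hA : is_flow A) (hB : is_flow B).
Hypothesis HF : frame A B newV remV newE [:: e0] modE.
Hypothesis He0 : e0 \in fE A.

Lemma frame_newV_fresh v : v \in newV -> v \notin fV A.
Proof. by case: HF => [[_ /allP H]] _ _ _ _ /H. Qed.

Lemma frame_old_not_new x : x \in fE A -> x \notin newE.
Proof. by case: HF => _ [_ /allP H] _ _ _ Hx; apply/negP => /H; rewrite Hx. Qed.

Lemma up_old_not_new x v : x \in fE A -> up A x = Some v -> v \in newV -> False.
Proof. by move=> Hx /(up_in_fV hA Hx) Hv /frame_newV_fresh; rewrite Hv. Qed.

Lemma lo_old_not_new x v : x \in fE A -> lo A x = Some v -> v \in newV -> False.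
Proof. by move=> Hx /(lo_in_fV hA Hx) Hv /frame_newV_fresh; rewrite Hv. Qed.

Lemma frame_fE_cases x : x \in fE B -> x \in newE \/ (x \in fE A /\ x \notin [:: e0]).
Proof.
case: HF => _ _ [_ ->] _ _; rewrite mem_cat mem_filter.
by case/orP => [->|/andP [-> ->]]; [left|right].
Qed.

Lemma frame_eta v : v \in fV A -> v \in fV B -> eta B v = eta A v.
Proof.
case: HF => _ _ [-> _] Heta _ HA; rewrite mem_cat mem_filter.
by case/orP => [/frame_newV_fresh|/andP [Hr _]]; [rewrite HA|apply: Heta].
Qed.

Lemma frame_keep x : x \in fE A -> x \notin [:: e0] -> x \notin modE ->
  up B x = up A x /\ lo B x = lo A x.
Proof. by case: HF => _ _ _ _; apply. Qed.

Lemma has_kind_old P (o : option nat) : (forall v, o = Some v -> v \in fV A) ->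
  has_kind P B o -> has_kind P A o.
Proof.
case: o => [v /(_ v erefl) Hv|] //=.
by case/andP => HvB; rewrite (frame_eta Hv HvB) Hv.
Qed.

Lemma origin_old x d : x \in fE A -> origin newE e0 flip (x, d) = (x, d).
Proof. by move=> Hx; rewrite /origin /= (negbTE (frame_old_not_new Hx)). Qed.

Hypothesis new_ends :
  forall x v, x \in newE -> (up B x = Some v \/ lo B x = Some v) -> v \in newV.
Hypothesis mod_up :
  forall x v, x \in modE -> x \in fE A -> up B x = Some v -> v \in newV \/ up A x = Some v.
Hypothesis mod_lo :
  forall x v, x \in modE -> x \in fE A -> lo B x = Some v -> v \in newV \/ lo A x = Some v.

Lemma frame_src_old a v : a.1 \in fE B -> src B a = Some v -> v \notin newV ->
  a.1 \in fE A /\ src A a = Some v.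
Proof.
move=> Hx Hs Hv; case: (frame_fE_cases Hx) => [Hn|[HA Hr]].
  by rewrite (new_ends (v := v) Hn) in Hv; move: Hs; rewrite /src; case: a.2; auto.
split=> //; case: (boolP (a.1 \in modE)) => Hm; last first.
  by have [E1 E2] := frame_keep HA Hr Hm; move: Hs; rewrite /src E1 E2.
move: Hs; rewrite /src; case: a.2 => Hs.
  by case: (mod_up Hm HA Hs) => // H; rewrite H in Hv.
by case: (mod_lo Hm HA Hs) => // H; rewrite H in Hv.
Qed.

Lemma frame_tgt_old a v : a.1 \in fE B -> tgt B a = Some v -> v \notin newV ->
  a.1 \in fE A /\ tgt A a = Some v.
Proof.
case: a => x d; have -> : tgt B (x, d) = src B (x, ~~ d) by rewrite /tgt /src; case: d.
have -> : tgt A (x, d) = src A (x, ~~ d) by rewrite /tgt /src; case: d.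
exact: (frame_src_old (a := (x, ~~ d))).
Qed.

(* Away from the new vertices, B looks exactly like A. *)
Lemma frame_arc_old a b v : ai_arc B a b -> tgt B a = Some v -> v \notin newV ->
  ai_arc A (origin newE e0 flip a) (origin newE e0 flip b).
Proof.
case/and3P=> Ha Hb /ai_linkP [w [Ht Hs K]]; rewrite Ht => -[<-] Hv.
have [HaA Ht'] := frame_tgt_old Ha Ht Hv; have [HbA Hs'] := frame_src_old Hb Hs Hv.
rewrite /origin (negbTE (frame_old_not_new HaA)) (negbTE (frame_old_not_new HbA)).
rewrite /ai_arc HaA HbA; apply/ai_linkP; exists w; split=> //.
case: K => [|[N D T]]; [by left|right; split=> //].
by rewrite -(frame_eta (tgt_in_fV hA HaA Ht') (tgt_in_fV hB Ha Ht)).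
Qed.

Lemma frame_end_new x v : x \in fE B -> (up B x = Some v \/ lo B x = Some v) ->
  v \in newV -> x \in newE \/ (x \in modE /\ x \in fE A).
Proof.
move=> Hx Hv Hn; case: (frame_fE_cases Hx) => [|[HA Hr]]; first by left.
case: (boolP (x \in modE)) => Hm; first by right.
have [E1 E2] := frame_keep HA Hr Hm.
by rewrite E1 E2 in Hv; case: Hv => H; [case: (up_old_not_new HA H)|case: (lo_old_not_new HA H)].
Qed.

Section Weight.
Variables (N : nat) (r : oedge -> nat).
Local Notation rB := (pull_rank newE e0 flip r).

Lemma ctr_weight_old x : x \in fE A -> up B x = up A x -> ctr_weight B N rB x <= ctr_weight A N r x.
Proof.
move=> Hx E; rewrite /ctr_weight /pull_rank !origin_old // E.
by case K: has_kind => //; rewrite (has_kind_old (fun _ => up_in_fV hA Hx) K).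
Qed.

Lemma coctr_weight_old x : x \in fE A -> lo B x = lo A x ->
  coctr_weight B N rB x <= coctr_weight A N r x.
Proof.
move=> Hx E; rewrite /coctr_weight /pull_rank !origin_old // E.
by case K: has_kind => //; rewrite (has_kind_old (fun _ => lo_in_fV hA Hx) K).
Qed.

Lemma edge_weight_relink_lo x : x \in fE A -> up B x = up A x ->
  edge_weight B N rB x - edge_weight A N r x <= coctr_weight B N r x.
Proof.
move=> Hx E; rewrite leq_subLR /edge_weight -addnA leq_add ?ctr_weight_old //.
by rewrite /coctr_weight /pull_rank !origin_old // leq_addl.
Qed.

Lemma edge_weight_relink_up x : x \in fE A -> lo B x = lo A x ->
  edge_weight B N rB x - edge_weight A N r x <= ctr_weight B N r x.
Proof.
move=> Hx E; rewrite leq_subLR /edge_weight addnAC leq_add ?coctr_weight_old //.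
by rewrite /ctr_weight /pull_rank !origin_old // leq_addl.
Qed.

Hypothesis new_weight0 : forall x, x \in newE -> edge_weight B N rB x = 0.

Lemma frame_weight_bound : weight B N rB + edge_weight A N r e0 <=
  weight A N r + \sum_(m <- modE) (edge_weight B N rB m - edge_weight A N r m).
Proof.
set old := [seq x <- fE A | x \notin [:: e0]].
have Uold : uniq (newE ++ old).
  rewrite cat_uniq filter_uniq ?(uniq_fE hA) // andbT.
  case: HF => _ [-> _] _ _ _ /=; apply/hasPn => x; rewrite mem_filter => /andP [_ Hx].
  exact: frame_old_not_new.
have Pm : perm_eq (fE B) (newE ++ old).
  by apply: uniq_perm (uniq_fE hB) Uold _; case: HF => _ _ [].
rewrite /weight (perm_big _ Pm) big_cat /= big1_seq ?add0n; last first.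
  by move=> x /andP [_ Hx]; apply: new_weight0.
rewrite [\sum_(x <- fE A) _](bigD1_seq e0) ?(uniq_fE hA) //=.
rewrite -[\sum_(x <- fE A | x != e0) _]big_filter.
have -> : [seq x <- fE A | x != e0] = old by apply: eq_filter => x; rewrite inE.
set D := fun m => edge_weight B N rB m - edge_weight A N r m.
have Hold : \sum_(x <- old) edge_weight B N rB x <=
    \sum_(x <- old) (edge_weight A N r x + \sum_(m <- modE) (if x == m then D m else 0)).
  rewrite big_seq [X in _ <= X]big_seq; apply: leq_sum => x.
  rewrite mem_filter => /andP [Hr HxA].
  case: (boolP (x \in modE)) => Hxm.
    by rewrite -leq_subLR; apply: (sum_pick_ge D Hxm).
  have [E1 E2] := frame_keep HxA Hr Hxm.
  by apply: leq_trans (leq_addr _ _); rewrite leq_add ?ctr_weight_old ?coctr_weight_old.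
rewrite [X in _ <= X]big_split /= exchange_big /= in Hold.
rewrite addnC -addnA leq_add2l; apply: leq_trans Hold _; rewrite leq_add2l.
by rewrite big_seq_cond [X in _ <= X]big_seq_cond; apply: leq_sum => m _;
  apply: sum_pick_le; rewrite filter_uniq ?(uniq_fE hA).
Qed.

Hypothesis arcs_new : forall a b v, ai_arc B a b -> tgt B a = Some v -> v \in newV ->
  ai_arc A (origin newE e0 flip a) (origin newE e0 flip b).
Hypothesis weight_drop :
  \sum_(m <- modE) (edge_weight B N rB m - edge_weight A N r m) < edge_weight A N r e0.

Lemma frame_pull_rank_step : ai_rank A r N -> ai_rank B rB N /\ weight B N rB < weight A N r.
Proof.
move=> [Hr HN]; split; first split.
- move=> a b Hab; apply: Hr; case/and3P: (Hab) => _ _ /ai_linkP [v [Hv _ _]].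
  by case: (boolP (v \in newV)) => Hn; [apply: arcs_new Hab Hv Hn|apply: frame_arc_old Hab Hv Hn].
- move=> a Ha; apply: HN; rewrite /origin; case: ifP => // Hn'.
  by case: (frame_fE_cases Ha) => [H|[]]; first by rewrite H in Hn'.
- rewrite -(ltn_add2r (edge_weight A N r e0)); apply: leq_ltn_trans frame_weight_bound _.
  by rewrite ltn_add2l.
Qed.

End Weight.

End Frame.

(** * The three rewrite rules *)

Lemma in_seq2 (T : eqType) (x a b : T) : x \in [:: a; b] -> x = a \/ x = b.
Proof. by rewrite !inE => /orP [] /eqP; auto. Qed.

Lemma in_seq3 (T : eqType) (x a b c : T) : x \in [:: a; b; c] -> [\/ x = a, x = b | x = c].
Proof. by rewrite !inE => /or3P [] /eqP; [constructor 1|constructor 2|constructor 3]. Qed.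

Lemma in_seq4 (T : eqType) (x a b c d : T) :
  x \in [:: a; b; c; d] -> [\/ x = a, x = b, x = c | x = d].
Proof.
by rewrite !inE => /or4P [] /eqP; [constructor 1|constructor 2|constructor 3|constructor 4].
Qed.

Ltac old_edge_at_new_vertex hA HF :=
  exfalso; match goal with
  | H : up _ _ = Some _ |- _ =>
      apply: (up_old_not_new hA HF _ H); [assumption|by rewrite !inE eqxx ?orbT]
  | H : lo _ _ = Some _ |- _ =>
      apply: (lo_old_not_new hA HF _ H); [assumption|by rewrite !inE eqxx ?orbT]
  end.

Section RuleC1.
Variables (A B : flow) (g k e1 e2 e3 e k' c1 c2 d1 d2 : nat).
Hypotheses (hA : is_flow A) (hB : is_flow B).
Hypothesis HF : frame A B [:: k'; c1; c2] [:: g; k] [:: d1; d2] [:: e] [:: e1; e2; e3].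
Hypotheses (Hg : g \in fV A) (Eg : eta A g = Ctr) (Hk : k \in fV A) (Ek : eta A k = Cut).
Hypotheses (He1 : e1 \in fE A) (He2 : e2 \in fE A) (He3 : e3 \in fE A) (He : e \in fE A).
Hypotheses (N12 : e1 != e2) (L1 : lo A e1 = Some g) (L2 : lo A e2 = Some g).
Hypotheses (Ue : up A e = Some g) (Le : lo A e = Some k) (N3 : e3 != e) (L3 : lo A e3 = Some k).
Hypotheses (Ek' : eta B k' = Coctr) (Ec1 : eta B c1 = Cut) (Ec2 : eta B c2 = Cut).
Hypotheses (UB1 : up B e1 = up A e1) (LB1 : lo B e1 = Some c1).
Hypotheses (UB2 : up B e2 = up A e2) (LB2 : lo B e2 = Some c2).
Hypotheses (UB3 : up B e3 = up A e3) (LB3 : lo B e3 = Some k').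
Hypotheses (UD1 : up B d1 = Some k') (LD1 : lo B d1 = Some c1).
Hypotheses (UD2 : up B d2 = Some k') (LD2 : lo B d2 = Some c2).

Lemma c1_arcs_new a b v : ai_arc B a b -> tgt B a = Some v -> v \in [:: k'; c1; c2] ->
  ai_arc A (origin [:: d1; d2] e true a) (origin [:: d1; d2] e true b).
Proof.
have [[UV _] _ _ _ _] := HF.
have [Nk1 Nk2 Nc] : [/\ k' <> c1, k' <> c2 & c1 <> c2].
  by move: UV; rewrite /= !inE negb_or => /and3P [/andP [/eqP ? /eqP ?] /eqP ? _].
have nE1 := negbTE (frame_old_not_new HF He1); have nE2 := negbTE (frame_old_not_new HF He2).
have nE3 := negbTE (frame_old_not_new HF He3); have nE := negbTE (frame_old_not_new HF He).
case: a b => [x dx] [y dy] Hab Hh Hv.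
case/and3P: (Hab) => /= Hx Hy /ai_linkP [w [Hh' Ht K]]; rewrite Hh in Hh'; case: Hh' => Ew; subst w.
have Ex : up B x = Some v \/ lo B x = Some v by move: Hh; rewrite /tgt /=; case: (dx); auto.
have Ey : up B y = Some v \/ lo B y = Some v by move: Ht; rewrite /src /=; case: (dy); auto.
case: (frame_end_new hA HF Hx Ex Hv) => [/in_seq2 [] Ex'|[/in_seq3 [] Ex' _]]; subst x;
case: (frame_end_new hA HF Hy Ey Hv) => [/in_seq2 [] Ey'|[/in_seq3 [] Ey' _]]; subst y;
case/in_seq3: Hv => Ev; subst v;
case: dx Hh K {Ex Hab}; case: dy Ht {Ey}; rewrite /tgt /src /= => Ht Hh K;
rewrite ?UB1 ?UB2 ?UB3 ?LB1 ?LB2 ?LB3 ?UD1 ?UD2 ?LD1 ?LD2 in Ht Hh;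
try congruence; try old_edge_at_new_vertex hA HF;
case: K => [E|[Nxy Ndd Kt]]; try congruence; try (rewrite ?Ek' ?Ec1 ?Ec2 in Kt; done);
rewrite /origin /= ?nE1 ?nE2 ?nE3 ?nE ?inE ?eqxx ?orbT /= /ai_arc /ai_link /tgt /src /=
  ?He ?He1 ?He2 ?He3 ?L1 ?L2 ?L3 ?Le ?Ue /= ?eqxx ?Ek ?Eg //=;
by rewrite andbT // eq_sym.
Qed.

Lemma c1_weight_drop N r : ai_rank A r N ->
  \sum_(m <- [:: e1; e2; e3])
     (edge_weight B N (pull_rank [:: d1; d2] e true r) m - edge_weight A N r m) <
  edge_weight A N r e.
Proof.
case=> Hr HN; rewrite !big_cons big_nil addn0.
have W1 := edge_weight_relink_lo true hA HF N r He1 UB1.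
have W2 := edge_weight_relink_lo true hA HF N r He2 UB2.
have W3 := leq_trans (edge_weight_relink_lo true hA HF N r He3 UB3) (coctr_weight_le B N r e3).
rewrite /coctr_weight LB1 LB2 /= Ec1 Ec2 !andbF in W1 W2.
have We : edge_weight A N r e = pow_dec N (r (e, true)) + pow_inc (r (e, false)).
  by rewrite /edge_weight /ctr_weight /coctr_weight Ue Le /= Hg Eg Hk Ek addn0.
have Hdown : ai_arc A (e, true) (e3, false).
  by rewrite /ai_arc /= He He3 /ai_link /tgt /src /= Le L3 eqxx /= eq_sym N3 Ek.
have Hup : ai_arc A (e3, true) (e, false).
  by rewrite /ai_arc /= He He3 /ai_link /tgt /src /= Le L3 eqxx /= N3 Ek.
have := pow_dec_lt (Hr _ _ Hdown) (HN (e3, false) He3).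
have := pow_inc_lt (Hr _ _ Hup).
have := pow_dec_gt0 N (r (e3, false)); have := pow_inc_gt0 (r (e3, true)).
lia.
Qed.

Lemma c1_pull_rank_step N r : ai_rank A r N ->
  ai_rank B (pull_rank [:: d1; d2] e true r) N /\
  weight B N (pull_rank [:: d1; d2] e true r) < weight A N r.
Proof.
move=> Hr; apply: (frame_pull_rank_step hA hB HF He) (Hr).
- move=> x v /in_seq2 [] -> [] H;
    rewrite ?UD1 ?UD2 ?LD1 ?LD2 in H; case: H => <-; by rewrite !inE eqxx ?orbT.
- by move=> x v /in_seq3 [] -> _ H; rewrite ?UB1 ?UB2 ?UB3 in H; right.
- move=> x v /in_seq3 [] -> _ H; rewrite ?LB1 ?LB2 ?LB3 in H; case: H => <-;
    by left; rewrite !inE eqxx ?orbT.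
- move=> x /in_seq2 [] ->;
    by rewrite /edge_weight /ctr_weight /coctr_weight ?UD1 ?UD2 ?LD1 ?LD2 /= ?Ek' ?Ec1 ?Ec2 !andbF.
- exact: c1_arcs_new.
- exact: c1_weight_drop Hr.
Qed.

End RuleC1.

Lemma c1_step_decreases A B N r : is_flow A -> is_flow B -> c1_step A B -> ai_rank A r N ->
  exists r', ai_rank B r' N /\ weight B N r' < weight A N r.
Proof.
move=> hA hB [g [k [e1 [e2 [e3 [e [k' [c1 [c2 [d1 [d2 H]]]]]]]]]]].
case: H => [[[Hg Eg Hk Ek] [He1 He2 He3 He]] [N12 L1 L2 Ue [Le N3 L3]] HF [Ek' Ec1 Ec2]
  [[UB1 LB1] [UB2 LB2] [UB3 LB3] [UD1 LD1] [UD2 LD2]]] Hr.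
by eexists; apply: (c1_pull_rank_step hA hB HF).
Qed.

Section RuleC2.
Variables (A B : flow) (i k e1 e2 e3 e4 g i1 i2 d1 d2 : nat).
Hypotheses (hA : is_flow A) (hB : is_flow B).
Hypothesis HF : frame A B [:: g; i1; i2] [:: i; k] [:: d1; d2] [:: e4] [:: e1; e2; e3].
Hypotheses (Hi : i \in fV A) (Ei : eta A i = Int) (Hk : k \in fV A) (Ek : eta A k = Coctr).
Hypotheses (He1 : e1 \in fE A) (He2 : e2 \in fE A) (He3 : e3 \in fE A) (He4 : e4 \in fE A).
Hypotheses (N34 : e3 != e4) (U3 : up A e3 = Some i) (U4 : up A e4 = Some i).
Hypotheses (L4 : lo A e4 = Some k) (N12 : e1 != e2) (U1 : up A e1 = Some k) (U2 : up A e2 = Some k).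
Hypotheses (Eg : eta B g = Ctr) (Ei1 : eta B i1 = Int) (Ei2 : eta B i2 = Int).
Hypotheses (UB3 : up B e3 = Some g) (LB3 : lo B e3 = lo A e3).
Hypotheses (UB1 : up B e1 = Some i1) (LB1 : lo B e1 = lo A e1).
Hypotheses (UB2 : up B e2 = Some i2) (LB2 : lo B e2 = lo A e2).
Hypotheses (UD1 : up B d1 = Some i1) (LD1 : lo B d1 = Some g).
Hypotheses (UD2 : up B d2 = Some i2) (LD2 : lo B d2 = Some g).

Lemma c2_arcs_new a b v : ai_arc B a b -> tgt B a = Some v -> v \in [:: g; i1; i2] ->
  ai_arc A (origin [:: d1; d2] e4 true a) (origin [:: d1; d2] e4 true b).
Proof.
have [[UV _] _ _ _ _] := HF.
have [Ng1 Ng2 Ni] : [/\ g <> i1, g <> i2 & i1 <> i2].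
  by move: UV; rewrite /= !inE negb_or => /and3P [/andP [/eqP ? /eqP ?] /eqP ? _].
have nE1 := negbTE (frame_old_not_new HF He1); have nE2 := negbTE (frame_old_not_new HF He2).
have nE3 := negbTE (frame_old_not_new HF He3); have nE4 := negbTE (frame_old_not_new HF He4).
case: a b => [x dx] [y dy] Hab Hh Hv.
case/and3P: (Hab) => /= Hx Hy /ai_linkP [w [Hh' Ht K]]; rewrite Hh in Hh'; case: Hh' => Ew; subst w.
have Ex : up B x = Some v \/ lo B x = Some v by move: Hh; rewrite /tgt /=; case: (dx); auto.
have Ey : up B y = Some v \/ lo B y = Some v by move: Ht; rewrite /src /=; case: (dy); auto.
case: (frame_end_new hA HF Hx Ex Hv) => [/in_seq2 [] Ex'|[/in_seq3 [] Ex' _]]; subst x;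
case: (frame_end_new hA HF Hy Ey Hv) => [/in_seq2 [] Ey'|[/in_seq3 [] Ey' _]]; subst y;
case/in_seq3: Hv => Ev; subst v;
case: dx Hh K {Ex Hab}; case: dy Ht {Ey}; rewrite /tgt /src /= => Ht Hh K;
rewrite ?UB1 ?UB2 ?UB3 ?LB1 ?LB2 ?LB3 ?UD1 ?UD2 ?LD1 ?LD2 in Ht Hh;
try congruence; try old_edge_at_new_vertex hA HF;
case: K => [E|[Nxy Ndd Kt]]; try congruence; try (rewrite ?Eg ?Ei1 ?Ei2 in Kt; done);
rewrite /origin /= ?nE1 ?nE2 ?nE3 ?nE4 ?inE ?eqxx ?orbT /= /ai_arc /ai_link /tgt /src /=
  ?He1 ?He2 ?He3 ?He4 ?U1 ?U2 ?U3 ?U4 ?L4 /= ?eqxx ?Ek ?Ei //=;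
try by rewrite andbT // eq_sym.
Qed.

Lemma c2_weight_drop N r : ai_rank A r N ->
  \sum_(m <- [:: e1; e2; e3])
     (edge_weight B N (pull_rank [:: d1; d2] e4 true r) m - edge_weight A N r m) <
  edge_weight A N r e4.
Proof.
case=> Hr HN; rewrite !big_cons big_nil addn0.
have W1 := edge_weight_relink_up true hA HF N r He1 LB1.
have W2 := edge_weight_relink_up true hA HF N r He2 LB2.
have W3 := leq_trans (edge_weight_relink_up true hA HF N r He3 LB3) (ctr_weight_le B N r e3).
rewrite /ctr_weight UB1 UB2 /= Ei1 Ei2 !andbF in W1 W2.
have We4 : edge_weight A N r e4 = pow_inc (r (e4, true)) + pow_dec N (r (e4, false)).
  by rewrite /edge_weight /ctr_weight /coctr_weight U4 L4 /= Hi Ei Hk Ek.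
have Hdown : ai_arc A (e3, false) (e4, true).
  by rewrite /ai_arc /= He4 He3 /ai_link /tgt /src /= U3 U4 eqxx /= N34 Ei.
have Hup : ai_arc A (e4, false) (e3, true).
  by rewrite /ai_arc /= He4 He3 /ai_link /tgt /src /= U3 U4 eqxx /= eq_sym N34 Ei.
have := pow_inc_lt (Hr _ _ Hdown).
have := pow_dec_lt (Hr _ _ Hup) (HN (e3, true) He3).
have := pow_dec_gt0 N (r (e3, true)); have := pow_inc_gt0 (r (e3, false)).
lia.
Qed.

Lemma c2_pull_rank_step N r : ai_rank A r N ->
  ai_rank B (pull_rank [:: d1; d2] e4 true r) N /\
  weight B N (pull_rank [:: d1; d2] e4 true r) < weight A N r.
Proof.
move=> Hr; apply: (frame_pull_rank_step hA hB HF He4) (Hr).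
- move=> x v /in_seq2 [] -> [] H;
    rewrite ?UD1 ?UD2 ?LD1 ?LD2 in H; case: H => <-; by rewrite !inE eqxx ?orbT.
- move=> x v /in_seq3 [] -> _ H; rewrite ?UB1 ?UB2 ?UB3 in H; case: H => <-;
    by left; rewrite !inE eqxx ?orbT.
- by move=> x v /in_seq3 [] -> _ H; rewrite ?LB1 ?LB2 ?LB3 in H; right.
- move=> x /in_seq2 [] ->;
    by rewrite /edge_weight /ctr_weight /coctr_weight ?UD1 ?UD2 ?LD1 ?LD2 /= ?Eg ?Ei1 ?Ei2 !andbF.
- exact: c2_arcs_new.
- exact: c2_weight_drop Hr.
Qed.

End RuleC2.

Lemma c2_step_decreases A B N r : is_flow A -> is_flow B -> c2_step A B -> ai_rank A r N ->
  exists r', ai_rank B r' N /\ weight B N r' < weight A N r.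
Proof.
move=> hA hB [i [k [e1 [e2 [e3 [e4 [g [i1 [i2 [d1 [d2 H]]]]]]]]]]].
case: H => [[[Hi Ei Hk Ek] [He1 He2 He3 He4]] [N34 U3 U4 L4 [N12 U1 U2]] HF [Eg Ei1 Ei2]
  [[UB3 LB3] [UB1 LB1] [UB2 LB2] [UD1 LD1] [UD2 LD2]]] Hr.
by eexists; apply: (c2_pull_rank_step hA hB HF).
Qed.

Section RuleC3.
Variables (A B : flow) (g k e1 e2 e e3 e4 ka1 ka2 ga3 ga4 f13 f14 f23 f24 : nat).
Hypotheses (hA : is_flow A) (hB : is_flow B).
Hypothesis HF : frame A B [:: ka1; ka2; ga3; ga4] [:: g; k] [:: f13; f14; f23; f24] [:: e]
  [:: e1; e2; e3; e4].
Hypotheses (Hg : g \in fV A) (Eg : eta A g = Ctr) (Hk : k \in fV A) (Ek : eta A k = Coctr).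
Hypotheses (He1 : e1 \in fE A) (He2 : e2 \in fE A) (He : e \in fE A).
Hypotheses (He3 : e3 \in fE A) (He4 : e4 \in fE A).
Hypotheses (N12 : e1 != e2) (L1 : lo A e1 = Some g) (L2 : lo A e2 = Some g).
Hypotheses (Ue : up A e = Some g) (Le : lo A e = Some k).
Hypotheses (N34 : e3 != e4) (U3 : up A e3 = Some k) (U4 : up A e4 = Some k).
Hypotheses (Ek1 : eta B ka1 = Coctr) (Ek2 : eta B ka2 = Coctr).
Hypotheses (Eg3 : eta B ga3 = Ctr) (Eg4 : eta B ga4 = Ctr).
Hypotheses (UB1 : up B e1 = up A e1) (LB1 : lo B e1 = Some ka1).
Hypotheses (UB2 : up B e2 = up A e2) (LB2 : lo B e2 = Some ka2).
Hypotheses (UB3 : up B e3 = Some ga3) (LB3 : lo B e3 = lo A e3).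
Hypotheses (UB4 : up B e4 = Some ga4) (LB4 : lo B e4 = lo A e4).
Hypotheses (UF13 : up B f13 = Some ka1) (LF13 : lo B f13 = Some ga3).
Hypotheses (UF14 : up B f14 = Some ka1) (LF14 : lo B f14 = Some ga4).
Hypotheses (UF23 : up B f23 = Some ka2) (LF23 : lo B f23 = Some ga3).
Hypotheses (UF24 : up B f24 = Some ka2) (LF24 : lo B f24 = Some ga4).

Lemma c3_arcs_new a b v : ai_arc B a b -> tgt B a = Some v -> v \in [:: ka1; ka2; ga3; ga4] ->
  ai_arc A (origin [:: f13; f14; f23; f24] e false a)
           (origin [:: f13; f14; f23; f24] e false b).
Proof.
have [[UV _] _ _ _ _] := HF.
have [[N1 N2 N3] [N4 N5 N6]] :
    [/\ ka1 <> ka2, ka1 <> ga3 & ka1 <> ga4] /\ [/\ ka2 <> ga3, ka2 <> ga4 & ga3 <> ga4].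
  by split; split=> E; move: UV; rewrite E /= !inE eqxx ?orbT ?andbF.
have nE1 := negbTE (frame_old_not_new HF He1); have nE2 := negbTE (frame_old_not_new HF He2).
have nE3 := negbTE (frame_old_not_new HF He3); have nE4 := negbTE (frame_old_not_new HF He4).
case: a b => [x dx] [y dy] Hab Hh Hv.
case/and3P: (Hab) => /= Hx Hy /ai_linkP [w [Hh' Ht K]]; rewrite Hh in Hh'; case: Hh' => Ew; subst w.
have Ex : up B x = Some v \/ lo B x = Some v by move: Hh; rewrite /tgt /=; case: (dx); auto.
have Ey : up B y = Some v \/ lo B y = Some v by move: Ht; rewrite /src /=; case: (dy); auto.
case/in_seq4: Hv => Ev; subst v;
case: (frame_end_new hA HF Hx Ex) => [|/in_seq4 [] Ex'|[/in_seq4 [] Ex' _]];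
  try (by rewrite !inE eqxx ?orbT); subst x;
move: Hh; rewrite /tgt /=; case: dx K {Ex Hab} => /= K Hh;
rewrite ?UB1 ?UB2 ?UB3 ?UB4 ?LB1 ?LB2 ?LB3 ?LB4 ?UF13 ?UF14 ?UF23 ?UF24
  ?LF13 ?LF14 ?LF23 ?LF24 in Hh;
try congruence; try old_edge_at_new_vertex hA HF;
case: (frame_end_new hA HF Hy Ey) => [|/in_seq4 [] Ey'|[/in_seq4 [] Ey' _]];
  try (by rewrite !inE eqxx ?orbT); subst y;
move: Ht; rewrite /src /=; case: dy K {Ey} => /= K Ht;
rewrite ?UB1 ?UB2 ?UB3 ?UB4 ?LB1 ?LB2 ?LB3 ?LB4 ?UF13 ?UF14 ?UF23 ?UF24
  ?LF13 ?LF14 ?LF23 ?LF24 in Ht;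
try congruence; try old_edge_at_new_vertex hA HF;
case: K => [E|[Nxy Ndd Kt]]; try congruence; try (rewrite ?Ek1 ?Ek2 ?Eg3 ?Eg4 in Kt; done);
rewrite /origin /= ?nE1 ?nE2 ?nE3 ?nE4 ?inE ?eqxx ?orbT /= /ai_arc /ai_link /tgt /src /=
  ?He ?He1 ?He2 ?He3 ?He4 ?L1 ?L2 ?U3 ?U4 ?Le ?Ue /= ?eqxx //=.
Qed.

Lemma c3_weight_drop N r : ai_rank A r N ->
  \sum_(m <- [:: e1; e2; e3; e4])
     (edge_weight B N (pull_rank [:: f13; f14; f23; f24] e false r) m - edge_weight A N r m) <
  edge_weight A N r e.
Proof.
case=> Hr HN; rewrite !big_cons big_nil addn0.
have W1 := leq_trans (edge_weight_relink_lo false hA HF N r He1 UB1) (coctr_weight_le B N r e1).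
have W2 := leq_trans (edge_weight_relink_lo false hA HF N r He2 UB2) (coctr_weight_le B N r e2).
have W3 := leq_trans (edge_weight_relink_up false hA HF N r He3 LB3) (ctr_weight_le B N r e3).
have W4 := leq_trans (edge_weight_relink_up false hA HF N r He4 LB4) (ctr_weight_le B N r e4).
have We : edge_weight A N r e = pow_dec N (r (e, true)) + pow_inc (r (e, false)) +
    (pow_inc (r (e, true)) + pow_dec N (r (e, false))).
  by rewrite /edge_weight /ctr_weight /coctr_weight Ue Le /= Hg Eg Hk Ek.
have arc_in (x : nat) : x \in fE A -> lo A x = Some g -> ai_arc A (x, true) (e, true).
  by move=> Hx Lx; rewrite /ai_arc /= He Hx /ai_link /tgt /src /= Lx Ue eqxx.
have arc_back (x : nat) : x \in fE A -> lo A x = Some g -> ai_arc A (e, false) (x, false).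
  by move=> Hx Lx; rewrite /ai_arc /= He Hx /ai_link /tgt /src /= Lx Ue eqxx.
have arc_out (x : nat) : x \in fE A -> up A x = Some k -> ai_arc A (e, true) (x, true).
  by move=> Hx Ux; rewrite /ai_arc /= He Hx /ai_link /tgt /src /= Le Ux eqxx.
have arc_out_back (x : nat) : x \in fE A -> up A x = Some k -> ai_arc A (x, false) (e, false).
  by move=> Hx Ux; rewrite /ai_arc /= He Hx /ai_link /tgt /src /= Le Ux eqxx.
rewrite We; apply: leq_ltn_trans (leq_add W1 (leq_add W2 (leq_add W3 W4))) _.
have := pow_inc_lt (Hr _ _ (arc_in _ He1 L1)); have := pow_inc_lt (Hr _ _ (arc_in _ He2 L2)).
have := pow_dec_lt (Hr _ _ (arc_back _ He1 L1)) (HN (e1, false) He1).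
have := pow_dec_lt (Hr _ _ (arc_back _ He2 L2)) (HN (e2, false) He2).
have := pow_dec_lt (Hr _ _ (arc_out _ He3 U3)) (HN (e3, true) He3).
have := pow_dec_lt (Hr _ _ (arc_out _ He4 U4)) (HN (e4, true) He4).
have := pow_inc_lt (Hr _ _ (arc_out_back _ He3 U3)).
have := pow_inc_lt (Hr _ _ (arc_out_back _ He4 U4)).
have := pow_dec_gt0 N (r (e, true)).
lia.
Qed.

Lemma c3_pull_rank_step N r : ai_rank A r N ->
  ai_rank B (pull_rank [:: f13; f14; f23; f24] e false r) N /\
  weight B N (pull_rank [:: f13; f14; f23; f24] e false r) < weight A N r.
Proof.
move=> Hr; apply: (frame_pull_rank_step hA hB HF He) (Hr).
- move=> x v /in_seq4 [] -> [] H;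
    rewrite ?UF13 ?UF14 ?UF23 ?UF24 ?LF13 ?LF14 ?LF23 ?LF24 in H; case: H => <-;
    by rewrite !inE eqxx ?orbT.
- move=> x v /in_seq4 [] -> _ H; rewrite ?UB1 ?UB2 ?UB3 ?UB4 in H;
    [by right|by right|by case: H => <-; left; rewrite !inE eqxx ?orbT..].
- move=> x v /in_seq4 [] -> _ H; rewrite ?LB1 ?LB2 ?LB3 ?LB4 in H;
    [by case: H => <-; left; rewrite !inE eqxx ?orbT|
     by case: H => <-; left; rewrite !inE eqxx ?orbT|by right..].
- move=> x /in_seq4 [] ->; rewrite /edge_weight /ctr_weight /coctr_weight
    ?UF13 ?UF14 ?UF23 ?UF24 ?LF13 ?LF14 ?LF23 ?LF24 /= ?Ek1 ?Ek2 ?Eg3 ?Eg4 !andbF //.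
- exact: c3_arcs_new.
- exact: c3_weight_drop Hr.
Qed.

End RuleC3.

Lemma c3_step_decreases A B N r : is_flow A -> is_flow B -> c3_step A B -> ai_rank A r N ->
  exists r', ai_rank B r' N /\ weight B N r' < weight A N r.
Proof.
move=> hA hB [g [k [e1 [e2 [e [e3 [e4 [ka1 [ka2 [ga3 [ga4 [f13 [f14 [f23 [f24 H]]]]]]]]]]]]]]].
case: H => [[[Hg Eg Hk Ek] [He1 He2 He He3 He4]] [N12 L1 L2 Ue [Le N34 U3 U4]] HF
  [Ek1 Ek2 Eg3 Eg4] [[[UB1 LB1] [UB2 LB2] [UB3 LB3] [UB4 LB4]]
  [UF13 LF13] [UF14 LF14] [UF23 LF23] [UF24 LF24]]] Hr.
by eexists; apply: (c3_pull_rank_step hA hB HF).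
Qed.

Lemma cstep_decreases A B N r : cstep A B -> is_flow B -> ai_rank A r N ->
  exists r', ai_rank B r' N /\ weight B N r' < weight A N r.
Proof.
case=> hA [H|[H|H]] hB.
- exact: c1_step_decreases H.
- exact: c2_step_decreases H.
- exact: c3_step_decreases H.
Qed.

Theorem theorem4p22 :
  ~ exists A : nat -> flow,
      is_flow (A 0) /\ cycle_free (A 0) /\ forall n, cstep (A n) (A n.+1).
Proof.
move=> [A [flow0 [cf0 Hstep]]].
have [r0 Hr0] := cycle_free_ai_rank flow0 cf0.
set N := size (oedges (A 0)) in Hr0.
have flowA n : is_flow (A n) by case: n => [|n] //; case: (Hstep n.+1).
have descent n : exists r, ai_rank (A n) r N /\ weight (A n) N r + n <= weight (A 0) N r0.
  elim: n => [|n [r [Hr Hw]]]; first by exists r0; rewrite addn0.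
  have [r' [Hr' Hlt]] := cstep_decreases (Hstep n) (flowA n.+1) Hr.
  by exists r'; split=> //; rewrite addnS; apply: leq_trans Hw; rewrite ltn_add2r.
have [r [_ Hw]] := descent (weight (A 0) N r0).+1.
by move: Hw; rewrite addnS ltnNge leq_addl.
Qed.
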